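(* Let $P$ and $Q$ be probability distributions (with densities, $P$ absolutely continuous with respect to $Q$), let $\epsilon \ge 0$, $\delta > 0$ and $\tau > 1$. Let $Y_1, \dots, Y_s$ be i.i.d. samples from the privacy loss distribution of $(P,Q)$, i.e. each $Y_k = \log\frac{P(X_k)}{Q(X_k)}$ with $X_k \sim P$ drawn independently, and let $$\hat{\delta} = \frac{1}{s}\sum_{k=1}^s \max\{1 - e^{\epsilon - Y_k}, 0\}.$$ If $H_{e^\epsilon}(P,Q) \ge \tau\delta$, then $$\Pr[\hat{\delta} < \delta] \le \exp\left(-\frac{s(\tau-1)^2\delta}{8\tau/3 - 2/3}\right).$$
   Context: For distributions $P, Q$ and $\alpha \ge 0$, the $\alpha$-hockey-stick divergence is $H_\alpha(P,Q) = \int_x \max\{P(x) - \alpha Q(x), 0\}\,dx$. It satisfies $H_\alpha(P,Q) = \mathbb{E}_Y[\max\{1-\alpha e^{-Y},0\}]$ where $Y$ follows the privacy loss distribution of $(P,Q)$, so $\hat\delta$ is a Monte Carlo estimate of $H_{e^\epsilon}(P,Q)$. *)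

From HB Require Import structures.
From mathcomp Require Import all_boot all_order all_algebra.
From mathcomp Require Import all_classical all_reals all_analysis.
Set Implicit Arguments. Unset Strict Implicit. Unset Printing Implicit Defensive.
Import Order.TTheory GRing.Theory Num.Theory.
Local Open Scope classical_set_scope.
Local Open Scope ring_scope.
Local Open Scope ereal_scope.

Definition dens_measure d (T : measurableType d) (R : realType)
  (mu : {measure set T -> \bar R}) (f : T -> R) (A : set T) : \bar R :=
  \int[mu]_(x in A) (f x)%:E.

Definition is_density d (T : measurableType d) (R : realType)
  (mu : {measure set T -> \bar R}) (f : T -> R) : Prop :=
  measurable_fun setT f /\ (forall x, (0 <= f x)%R) /\
  \int[mu]_x (f x)%:E = 1.

Definition abs_cont d (T : measurableType d) (R : realType)
  (mu : {measure set T -> \bar R}) (p q : T -> R) : Prop :=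
  forall A, measurable A -> dens_measure mu q A = 0 -> dens_measure mu p A = 0.

Definition hockey_stick d (T : measurableType d) (R : realType)
  (mu : {measure set T -> \bar R}) (p q : T -> R) (alpha : R) : \bar R :=
  \int[mu]_x (Num.max (p x - alpha * q x) 0)%R%:E.

Definition mutually_independent dO (Omega : measurableType dO) (R : realType)
  (Pr : probability Omega R) d (T : measurableType d) (s : nat)
  (X : 'I_s -> Omega -> T) : Prop :=
  forall A : 'I_s -> set T, (forall k, measurable (A k)) ->
    Pr (\bigcap_(k in [set: 'I_s]) (X k @^-1` A k)) =
    \prod_(k < s) Pr (X k @^-1` A k).

Definition privacy_loss (R : realType) T (p q : T -> R) (x : T) : R :=
  ln (p x / q x).

Definition delta_hat (R : realType) (s : nat) (eps : R) (Y : 'I_s -> R) : R :=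
  (s%:R^-1 * \sum_(k < s) Num.max (1 - expR (eps - Y k)) 0)%R.

(* Chernoff's method for the lower tail of a sum of i.i.d. variables with values
   in [0, 1]: for lam = (tau - 1) / tau, the moment generating function bound
   exp(-lam z) <= 1 - (lam - lam^2/2) z on [0, 1], together with the mean
   E[max(1 - e^eps e^(-Y), 0)] = H_{e^eps}(P, Q) >= tau delta, gives the exponent
   -s (tau - 1)^2 delta / (2 tau), which is strictly better than the claimed one.
   Independence is only available for events, so the summands are first rounded
   down to a grid of mesh 1/N; the event then lies in a finite union of product
   cells whose probabilities factor, and the rounding costs at most 1/N in the
   exponent, which the slack absorbs for N large. *)

From HB Require Import structures.
From mathcomp Require Import all_boot all_order all_algebra.
From mathcomp Require Import all_classical all_reals all_analysis.
From mathcomp Require Import ring lra measurable_realfun.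
Set Implicit Arguments. Unset Strict Implicit. Unset Printing Implicit Defensive.
Import Order.TTheory GRing.Theory Num.Theory.
Local Open Scope classical_set_scope.
Local Open Scope ring_scope.

Section exp_bounds.
Variable R : realType.
Implicit Types x lam z : R.

Lemma expR_ge_taylor2 x : 0 <= x -> 1 + x + x ^+ 2 / 2 <= expR x.
Proof.
move=> x0; have -> : 1 + x + x ^+ 2 / 2 = series (exp_coeff x) 3.
  by rewrite seriesEord /= !big_ord_recr big_ord0 /= !exp_coeffE /= expr0 expr1 !invr1 !mul1r add0r mulrC.
apply: nondecreasing_cvgn_le; last exact: is_cvg_series_exp_coeff.
by apply: nondecreasing_series => n _ _; rewrite divr_ge0 ?exprn_ge0.
Qed.

Lemma expRN_le_taylor2 x : 0 <= x -> expR (- x) <= 1 - x + x ^+ 2 / 2.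
Proof.
move=> x0; rewrite expRN -div1r ler_pdivrMr ?expR_gt0//.
have taylor_ge1 : 1 <= (1 - x + x ^+ 2 / 2) * (1 + x + x ^+ 2 / 2) by nra.
apply: le_trans taylor_ge1 _; rewrite ler_wpM2l ?expR_ge_taylor2//; nra.
Qed.

Lemma expRN_mul_le lam z : 0 <= lam <= 1 -> 0 <= z <= 1 ->
  expR (- (lam * z)) <= 1 - (lam - lam ^+ 2 / 2) * z.
Proof.
move=> /andP[lam0 lam1] /andP[z0 z1].
apply: le_trans (expRN_le_taylor2 (mulr_ge0 lam0 z0)) _.
have : (lam * z) ^+ 2 <= lam ^+ 2 * z.
  by rewrite exprMn ler_wpM2l ?exprn_ge0// expr2 ler_piMr.
nra.
Qed.

End exp_bounds.

Lemma measurable_inv (R : realType) : measurable_fun [set: R] (@GRing.inv R).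
Proof.
rewrite -(setUCr [set (0:R)]).
apply/measurable_funU => //; [exact: measurableC | split].
- move=> _ Y mY.
  have [Y0|Y0] := pselect (Y 0^-1).
  + rewrite (_ : _ `&` _ = [set 0]) //.
    by apply/seteqP; split => x /=; [case | move=> ->].
  + rewrite (_ : _ `&` _ = set0) //.
    by apply/seteqP; split => x //=; case => -> /Y0.
- apply: open_continuous_measurable_fun.
    by apply: closed_openC; apply: compact_closed; [exact: Rhausdorff | exact: compact_set1].
  by move=> x; rewrite inE /= => /eqP x0; exact: inv_continuous.
Qed.

Definition hockey_weight (R : realType) (eps y : R) : R :=
  Num.max (1 - expR (eps - y)) 0.

Section hockey_weight.
Variable R : realType.
Implicit Types eps y a b : R.

Lemma hockey_weight_ge0 eps y : 0 <= hockey_weight eps y.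
Proof. by rewrite le_max lexx orbT. Qed.

Lemma hockey_weight_le1 eps y : hockey_weight eps y <= 1.
Proof. by rewrite ge_max ler01 andbT gerBl expR_ge0. Qed.

Lemma measurable_hockey_weight eps : measurable_fun [set: R] (hockey_weight eps).
Proof.
apply: measurable_maxr; last exact: measurable_cst.
apply: measurable_funB; first exact: measurable_cst.
apply: measurableT_comp; first exact: measurable_expR.
exact: measurable_funB.
Qed.

Lemma hockey_weight_ln_ratio eps a b : 0 <= a -> 0 < b ->
  Num.max (a - expR eps * b) 0 = hockey_weight eps (ln (a / b)) * a.
Proof.
move=> a0 b0; rewrite /hockey_weight.
have [->|a_neq0] := eqVneq a 0.
  by rewrite mulr0 sub0r; apply/max_idPr; rewrite oppr_le0 mulr_ge0 ?expR_ge0 ?ltW.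
have {a0 a_neq0}a0 : 0 < a by rewrite lt_def a_neq0.
rewrite maxr_pMl ?ltW// mul0r expRB lnK ?posrE ?divr_gt0//.
by congr Num.max; field; rewrite !gt_eqF.
Qed.

End hockey_weight.

Section privacy_loss.
Variables (R : realType) (d : measure_display) (T : measurableType d) (p q : T -> R).
Hypotheses (mp : measurable_fun [set: T] p) (mq : measurable_fun [set: T] q).

Lemma measurable_privacy_loss : measurable_fun [set: T] (privacy_loss p q).
Proof.
apply: measurableT_comp; first exact: measurable_ln.
by apply: measurable_funM => //; apply: measurableT_comp => //; exact: measurable_inv.
Qed.

Variable mu : {measure set T -> \bar R}.
Hypotheses (p_ge0 : forall x, 0 <= p x) (q_ge0 : forall x, 0 <= q x).
Hypothesis pq : abs_cont mu p q.

Local Open Scope ereal_scope.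

Lemma hockey_stick_le_integral eps : hockey_stick mu p q (expR eps) <=
  \int[mu]_x (hockey_weight eps (privacy_loss p q x) * p x)%:E.
Proof.
set Z := [set x | q x = 0%R].
have mZ : measurable Z by rewrite -[Z]setTI; exact: mq (measurable_set1 0%R).
have mhs : measurable_fun [set: T] (fun x => Num.max (p x - expR eps * q x) 0)%R.
  apply: measurable_maxr; last exact: measurable_cst.
  by apply: measurable_funB => //; exact: measurable_funM.
have mw : measurable_fun [set: T] (fun x => hockey_weight eps (privacy_loss p q x) * p x)%R.
  apply: measurable_funM => //; apply: measurableT_comp.
    exact: measurable_hockey_weight.
  exact: measurable_privacy_loss.
rewrite /hockey_stick -(setUCr Z) ge0_integral_setU //; first last.
- by rewrite disj_set2E setICr.
- by move=> x _; rewrite lee_fin le_max lexx orbT.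
- by rewrite setUCr; exact/measurable_EFinP.
- exact: measurableC.
have -> : \int[mu]_(x in Z) (Num.max (p x - expR eps * q x) 0)%:E = 0.
  have qZ0 : dens_measure mu q Z = 0 by apply: integral0_eq => x /= ->.
  rewrite -(pq mZ qZ0); apply: eq_integral => x; rewrite inE /= => ->.
  by rewrite mulr0 subr0; congr EFin; apply/max_idPl.
rewrite add0e.
have -> : \int[mu]_(x in ~` Z) (Num.max (p x - expR eps * q x) 0)%:E =
          \int[mu]_(x in ~` Z) (hockey_weight eps (privacy_loss p q x) * p x)%:E.
  apply: eq_integral => x; rewrite inE /= => qx_neq0; congr EFin.
  by apply: hockey_weight_ln_ratio => //; rewrite lt_def q_ge0 andbT; apply/eqP.
rewrite setUCr; apply: ge0_subset_integral => //; first exact: measurableC.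
  exact/measurable_EFinP.
by move=> x _; rewrite lee_fin mulr_ge0 ?hockey_weight_ge0.
Qed.

End privacy_loss.

Definition grid_level (R : realType) (T : Type) (N : nat) (g : T -> R) (x : T) : 'I_N.+1 :=
  inord (Num.truncn (g x * N%:R)).

Section grid_level.
Variables (R : realType) (T : Type) (N : nat) (g : T -> R).
Hypotheses (g_ge0 : forall x, 0 <= g x) (g_le1 : forall x, g x <= 1).

Lemma grid_levelE x : grid_level N g x = Num.truncn (g x * N%:R) :> nat.
Proof.
rewrite inordK// truncn_lt_nat ?mulr_ge0//.
by rewrite (le_lt_trans (ler_piMl _ (g_le1 x))) ?ltr_nat.
Qed.

Lemma grid_level_le x : (grid_level N g x)%:R / N%:R <= g x.
Proof.
have [->|N_gt0] := posnP N; first by rewrite invr0 mulr0.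
by rewrite ler_pdivrMr ?ltr0n// grid_levelE truncn_le mulr_ge0.
Qed.

Lemma grid_level_gt x : (0 < N)%N -> g x < (grid_level N g x).+1%:R / N%:R.
Proof. by move=> N_gt0; rewrite ltr_pdivlMr ?ltr0n// grid_levelE truncnS_gt. Qed.

Lemma grid_level_setE j :
  grid_level N g @^-1` [set j] = (fun x => g x * N%:R) @^-1` `[j%:R, j.+1%:R[.
Proof.
apply/seteqP; split => x /=; rewrite in_itv /= -truncn_eq ?mulr_ge0//.
  by move=> <-; rewrite grid_levelE.
by move=> /eqP gxj; apply: val_inj; rewrite /= grid_levelE.
Qed.

End grid_level.

Section measurable_grid_level.
Variables (R : realType) (d : measure_display) (T : measurableType d).
Variables (N : nat) (g : T -> R).
Hypotheses (g_ge0 : forall x, 0 <= g x) (g_le1 : forall x, g x <= 1).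
Hypothesis mg : measurable_fun [set: T] g.

Lemma measurable_grid_level_set j : measurable (grid_level N g @^-1` [set j]).
Proof.
rewrite (grid_level_setE g_ge0 g_le1) -[X in measurable X]setTI.
by apply: (measurable_funM mg (measurable_cst _)) => //; exact: measurable_itv.
Qed.

Local Open Scope ereal_scope.

Lemma integral_grid_level_sum (mu : {measure set T -> \bar R}) (f : T -> R) :
  measurable_fun [set: T] f -> (forall x, 0 <= f x)%R ->
  \int[mu]_x (f x)%:E =
  \sum_(j < N.+1) \int[mu]_(x in grid_level N g @^-1` [set j]) (f x)%:E.
Proof.
move=> mf f0.
have cover : \big[setU/set0]_(j <- index_enum 'I_N.+1) grid_level N g @^-1` [set j] = setT.
  apply/seteqP; split => // x _; rewrite -bigcup_seq.
  by exists (grid_level N g x) => //=; rewrite mem_index_enum.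
rewrite -cover ge0_integral_bigsetU ?cover//.
- exact: measurable_grid_level_set.
- exact: index_enum_uniq.
- by move=> i j _ _ [x [/= <- <-]].
- exact/measurable_EFinP.
- by move=> x _; rewrite lee_fin.
Qed.

End measurable_grid_level.

Lemma sum_ffun_lt_le_expR (R : realType) (I : finType) (n : nat) (f w : I -> R) (lam a : R) :
  0 <= lam -> (forall i, 0 <= w i) ->
  \sum_(v : {ffun 'I_n -> I} | \sum_(k < n) f (v k) < a) \prod_(k < n) w (v k) <=
  expR (lam * a) * (\sum_(i : I) expR (- (lam * f i)) * w i) ^+ n.
Proof.
move=> lam0 w0.
have -> : (\sum_i expR (- (lam * f i)) * w i) ^+ n =
    \prod_(k < n) \sum_i expR (- (lam * f i)) * w i by rewrite prodr_const card_ord.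
rewrite bigA_distr_bigA /= mulr_sumr.
rewrite [leRHS](bigID (fun v : {ffun 'I_n -> I} => \sum_(k < n) f (v k) < a)) /=.
rewrite -[leLHS]addr0 lerD ?sumr_ge0//; last first.
  by move=> v _; rewrite mulr_ge0 ?expR_ge0// prodr_ge0// => k _; rewrite mulr_ge0 ?expR_ge0.
apply: ler_sum => v fv_lt.
rewrite big_split /= -expR_sum mulrA -expRD -[leLHS]mul1r ler_wpM2r ?prodr_ge0//.
by rewrite -expR0 ler_expR sumrN -mulr_sumr -mulrBr mulr_ge0// subr_ge0 ltW.
Qed.

Lemma le_measure_cover (R : realType) d (T : measurableType d)
    (mu : {measure set T -> \bar R}) (I : finType) (P : pred I) (A : set T) (F : I -> set T) :
  measurable A -> (forall i, P i -> measurable (F i)) ->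
  A `<=` \bigcup_(i in [set i | P i]) F i -> (mu A <= \sum_(i | P i) mu (F i))%E.
Proof.
move=> mA mF AF; apply: le_trans (content_sub_fsum _ finite_finset mF mA AF) _.
rewrite (fsbigE (enum P)) ?enum_uniq//; first last.
- by move=> i Pi; rewrite mem_enum => /negP[].
- by move=> i /=; rewrite mem_enum.
rewrite big_enum_cond le_eqVlt (eq_bigl (fun i => P i)) ?eqxx// => i.
by rewrite mem_setE /in_mem /= andbb.
Qed.

Section grid_mass.
Variables (R : realType) (d : measure_display) (T : measurableType d).
Variables (mu : {measure set T -> \bar R}) (p : T -> R).
Hypotheses (mp : measurable_fun [set: T] p) (p_ge0 : forall x, 0 <= p x).
Hypothesis p_int1 : (\int[mu]_x (p x)%:E = 1)%E.
Variables (N : nat) (g : T -> R).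
Hypotheses (mg : measurable_fun [set: T] g).
Hypotheses (g_ge0 : forall x, 0 <= g x) (g_le1 : forall x, g x <= 1).

Let mgrid := measurable_grid_level_set (N := N) g_ge0 g_le1 mg.

Definition grid_mass (j : 'I_N.+1) : R :=
  fine (dens_measure mu p (grid_level N g @^-1` [set j])).

Lemma grid_massE j : dens_measure mu p (grid_level N g @^-1` [set j]) = (grid_mass j)%:E.
Proof.
have mpE : measurable_fun [set: T] (EFin \o p) by exact/measurable_EFinP.
have mass_ge0 : (0 <= dens_measure mu p (grid_level N g @^-1` [set j]))%E.
  by apply: integral_ge0 => x _; rewrite lee_fin.
have mass_le1 : (dens_measure mu p (grid_level N g @^-1` [set j]) <= 1)%E.
  rewrite -p_int1; apply: ge0_subset_integral => //=.
  by move=> x _; rewrite lee_fin.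
by rewrite fineK// ge0_fin_numE// (le_lt_trans mass_le1) ?ltry.
Qed.

Lemma grid_mass_ge0 j : 0 <= grid_mass j.
Proof. by rewrite fine_ge0//; apply: integral_ge0 => x _; rewrite lee_fin. Qed.

Let grid_mass_integralE j :
  (\int[mu]_(x in grid_level N g @^-1` [set j]) (p x)%:E = (grid_mass j)%:E)%E.
Proof. exact: grid_massE. Qed.

Lemma sum_grid_mass : \sum_(j < N.+1) grid_mass j = 1.
Proof.
have := integral_grid_level_sum N g_ge0 g_le1 mg mu mp p_ge0.
by rewrite p_int1; under eq_bigr do rewrite grid_mass_integralE; rewrite sumEFin => -[].
Qed.

Lemma integral_le_grid_mass : (0 < N)%N ->
  (\int[mu]_x (g x * p x)%:E <= (\sum_(j < N.+1) j.+1%:R / N%:R * grid_mass j)%:E)%E.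
Proof.
move=> N_gt0; have gp_ge0 x : 0 <= g x * p x by rewrite mulr_ge0.
rewrite (integral_grid_level_sum N g_ge0 g_le1 mg mu (measurable_funM mg mp) gp_ge0).
rewrite -sumEFin; apply: lee_sum => j _.
have mj := mgrid j.
rewrite EFinM -grid_mass_integralE -ge0_integralZl_EFin//; first last.
- by apply/measurable_EFinP; exact: measurable_funS mp.
- by move=> x _; rewrite lee_fin.
apply: ge0_le_integral => //.
- by move=> x _; rewrite lee_fin; exact: gp_ge0.
- by apply/measurable_EFinP; exact: measurable_funS (measurable_funM mg mp).
- by apply/measurable_funeM/measurable_EFinP; exact: measurable_funS mp.
move=> x /= gx_j; rewrite lee_fin ler_wpM2r// -gx_j ltW//.
exact: grid_level_gt.
Qed.

Lemma grid_mgf_le (lam m : R) : 0 <= lam <= 1 -> (0 < N)%N ->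
  (m%:E <= \int[mu]_x (g x * p x)%:E)%E ->
  \sum_(j < N.+1) expR (- (lam * (j%:R / N%:R))) * grid_mass j <=
  1 - (lam - lam ^+ 2 / 2) * (m - N%:R^-1).
Proof.
move=> lam01 N_gt0 m_le; set c := lam - lam ^+ 2 / 2.
have c_ge0 : 0 <= c.
  have /andP[lam0 lam1] := lam01.
  have : lam ^+ 2 <= lam by rewrite expr2 ler_piMr.
  rewrite /c; lra.
have m_leS := le_trans m_le (integral_le_grid_mass N_gt0); rewrite lee_fin in m_leS.
apply: (@le_trans _ _ (\sum_(j < N.+1) (1 - c * (j%:R / N%:R)) * grid_mass j)).
  apply: ler_sum => j _; rewrite ler_wpM2r ?grid_mass_ge0// expRN_mul_le//.
  by rewrite divr_ge0//= ler_pdivrMr ?ltr0n// mul1r ler_nat -ltnS.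
have -> : \sum_(j < N.+1) (1 - c * (j%:R / N%:R)) * grid_mass j =
    1 - c * (\sum_(j < N.+1) j.+1%:R / N%:R * grid_mass j - N%:R^-1).
  rewrite (eq_bigr (fun j => grid_mass j -
      c * (j.+1%:R / N%:R * grid_mass j - N%:R^-1 * grid_mass j))); last first.
    by move=> j _; rewrite -natr1; ring.
  by rewrite sumrB -mulr_sumr sumrB -mulr_sumr sum_grid_mass mulr1.
by rewrite lerB// ler_wpM2l// lerB.
Qed.

Variables (dO : measure_display) (Omega : measurableType dO) (Pr : probability Omega R).
Variables (s : nat) (X : 'I_s -> Omega -> T).
Hypothesis mX : forall k, measurable_fun [set: Omega] (X k).
Hypothesis lawX : forall k A, measurable A -> Pr (X k @^-1` A) = dens_measure mu p A.
Hypothesis indepX : mutually_independent Pr X.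

Lemma Pr_grid_cell (v : {ffun 'I_s -> 'I_N.+1}) :
  Pr (\bigcap_(k in [set: 'I_s]) X k @^-1` (grid_level N g @^-1` [set v k])) =
  (\prod_(k < s) grid_mass (v k))%:E.
Proof.
rewrite indepX -?prodEFin; last by move=> k; exact: mgrid.
by apply: eq_bigr => k _; rewrite lawX // grid_massE.
Qed.

Lemma Pr_sum_lt_le_grid (a : R) :
  (Pr [set w | (\sum_(k < s) g (X k w) < a)%R] <=
   (\sum_(v : {ffun 'I_s -> 'I_N.+1} | \sum_(k < s) (v k)%:R / N%:R < a)
      \prod_(k < s) grid_mass (v k))%R%:E)%E.
Proof.
have mcell v : measurable (\bigcap_(k in [set: 'I_s]) X k @^-1` (grid_level N g @^-1` [set v k])).
  apply: fin_bigcap_measurable => [|k _]; first exact: finite_finset.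
  by rewrite -[X in measurable X]setTI; exact: mX measurableT _ (mgrid (v k)).
have mE : measurable [set w | \sum_(k < s) g (X k w) < a].
  rewrite -[X in measurable X]setTI.
  have msum : measurable_fun [set: Omega] (fun w => \sum_(k < s) g (X k w)).
    by apply: measurable_sum => k; exact: measurableT_comp.
  by have := msum measurableT _ (measurable_itv `]-oo, a[); rewrite /preimage /= ?in_itv.
rewrite -sumEFin; under eq_bigr do rewrite -Pr_grid_cell.
apply: le_measure_cover => // w /= sum_lt.
exists [ffun k => grid_level N g (X k w)] => /=; last by move=> k _; rewrite ffunE.
apply: le_lt_trans sum_lt; apply: ler_sum => k _; rewrite ffunE.
exact: grid_level_le.
Qed.

Lemma Pr_sum_lt_le_expR (lam a : R) : 0 <= lam ->
  (Pr [set w | (\sum_(k < s) g (X k w) < a)%R] <=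
   (expR (lam * a) *
    (\sum_(j < N.+1) expR (- (lam * (j%:R / N%:R))) * grid_mass j) ^+ s)%R%:E)%E.
Proof.
move=> lam_ge0; apply: le_trans (Pr_sum_lt_le_grid a) _; rewrite lee_fin.
by apply: sum_ffun_lt_le_expR => // j; exact: grid_mass_ge0.
Qed.

End grid_mass.

Lemma chernoff_exp_le (R : realType) (lam delta b y : R) (n : nat) :
  0 <= b -> b <= 1 - y ->
  expR (lam * (n%:R * delta)) * b ^+ n <= expR (n%:R * (lam * delta - y)).
Proof.
move=> b_ge0 b_le; have b_leexp : b <= expR (- y) by apply: le_trans b_le (expR_ge1Dx _).
have -> : n%:R * (lam * delta - y) = lam * (n%:R * delta) + n%:R * - y by ring.
by rewrite expRD expRM_natl ler_wpM2l ?expR_ge0// lerXn2r// nnegrE ?expR_ge0.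
Qed.

Lemma chernoff_rate_le (R : realType) (tau delta lam : R) (N : nat) :
  1 < tau -> 0 < delta -> lam = (tau - 1) / tau ->
  tau * (8 * tau - 2) / (delta * (tau - 1) ^+ 3) <= N%:R ->
  lam * delta - (lam - lam ^+ 2 / 2) * (tau * delta - N%:R^-1) <=
  - ((tau - 1) ^+ 2 * delta) / (8 * tau / 3 - 2 / 3).
Proof.
move=> tau_gt1 delta_gt0 lamE N_ge.
set slack := delta * (tau - 1) ^+ 3 / (tau * (8 * tau - 2)).
have slack_gt0 : 0 < slack by rewrite divr_gt0 ?mulr_gt0 ?exprn_gt0//; lra.
have invN_le : N%:R^-1 <= slack.
  rewrite -[slack]invrK lef_pV2 ?posrE ?invr_gt0 ?(lt_le_trans _ N_ge)// ?invf_div//.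
  by rewrite -invf_div invr_gt0.
have lam01 : 0 <= lam <= 1.
  by rewrite lamE divr_ge0 ?ler_pdivrMr /=; lra.
have c01 : 0 <= lam - lam ^+ 2 / 2 <= 1.
  have /andP[lam0 lam1] := lam01; have : lam ^+ 2 <= lam by rewrite expr2 ler_piMr.
  have : 0 <= lam ^+ 2 / 2 by rewrite divr_ge0 ?exprn_ge0.
  lra.
have cN_le : (lam - lam ^+ 2 / 2) * N%:R^-1 <= slack.
  by apply: le_trans invN_le; rewrite ler_piMl ?invr_ge0 ?ler0n//; case/andP: c01.
have -> : - ((tau - 1) ^+ 2 * delta) / (8 * tau / 3 - 2 / 3) =
    lam * delta - (lam - lam ^+ 2 / 2) * (tau * delta) + slack.
  rewrite lamE /slack; field.
  by rewrite !gt_eqF//; lra.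
lra.
Qed.

Local Open Scope ereal_scope.

Theorem theorem2 (R : realType) (d : measure_display) (T : measurableType d)
  (mu : {measure set T -> \bar R}) (p q : T -> R)
  (dO : measure_display) (Omega : measurableType dO) (Pr : probability Omega R)
  (s : nat) (X : 'I_s -> Omega -> T) (eps delta tau : R) :
  is_density mu p -> is_density mu q -> abs_cont mu p q ->
  (0 <= eps)%R -> (0 < delta)%R -> (1 < tau)%R ->
  (forall k, measurable_fun setT (X k)) ->
  (forall k A, measurable A -> Pr (X k @^-1` A) = dens_measure mu p A) ->
  mutually_independent Pr X ->
  hockey_stick mu p q (expR eps) >= (tau * delta)%:E ->
  Pr [set w | (delta_hat eps (fun k => privacy_loss p q (X k w)) < delta)%R]
    <= (expR (- (s%:R * (tau - 1) ^+ 2 * delta) /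
                (8 * tau / 3 - 2 / 3)))%:E.
Proof.
move=> [mp [p_ge0 p_int1]] [mq [q_ge0 _]] pq _ delta_gt0 tau_gt1 mX lawX indepX hs_ge.
case: s X mX lawX indepX => [|s] X mX lawX indepX.
  (* For s = 0, [delta_hat] is [0^-1 * 0 = 0], so the event is the whole space. *)
  have -> : [set w | (delta_hat eps (fun k => privacy_loss p q (X k w)) < delta)%R] = setT.
    by apply/seteqP; split => // w _; rewrite /= /delta_hat big_ord0 mulr0.
  by rewrite probability_setT !mul0r oppr0 mul0r expR0.
set g := fun x => hockey_weight eps (privacy_loss p q x).
have mg : measurable_fun setT g.
  by apply: measurableT_comp; [exact: measurable_hockey_weight | exact: measurable_privacy_loss].
have g_ge0 x : (0 <= g x)%R by exact: hockey_weight_ge0.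
have g_le1 x : (g x <= 1)%R by exact: hockey_weight_le1.
set lam := ((tau - 1) / tau)%R.
have lam01 : (0 <= lam <= 1)%R.
  by rewrite divr_ge0 ?ler_pdivrMr /=; lra.
set N := (Num.truncn (tau * (8 * tau - 2) / (delta * (tau - 1) ^+ 3))).+1.
have -> : [set w | (delta_hat eps (fun k => privacy_loss p q (X k w)) < delta)%R] =
          [set w | (\sum_(k < s.+1) g (X k w) < s.+1%:R * delta)%R].
  by apply/seteqP; split => w /=; rewrite /delta_hat ltr_pdivrMl ?ltr0n.
apply: le_trans (Pr_sum_lt_le_expR mp p_ge0 p_int1 N mg g_ge0 g_le1 mX lawX indepX
  (s.+1%:R * delta) (andP lam01).1) _.
have mgf := grid_mgf_le (N := N) mp p_ge0 p_int1 mg g_ge0 g_le1 lam01 (ltn0Sn _)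
  (le_trans hs_ge (hockey_stick_le_integral mp mq p_ge0 q_ge0 pq eps)).
have mgf_ge0 : (0 <= \sum_(j < N.+1) expR (- (lam * (j%:R / N%:R))) * grid_mass mu p g j)%R.
  by apply: sumr_ge0 => j _; rewrite mulr_ge0 ?expR_ge0 ?grid_mass_ge0.
rewrite lee_fin; apply: le_trans (chernoff_exp_le lam delta s.+1 mgf_ge0 mgf) _.
have -> : (- (s.+1%:R * (tau - 1) ^+ 2 * delta) / (8 * tau / 3 - 2 / 3) =
    s.+1%:R * (- ((tau - 1) ^+ 2 * delta) / (8 * tau / 3 - 2 / 3)))%R by ring.
rewrite ler_expR ler_wpM2l//.
exact: chernoff_rate_le tau_gt1 delta_gt0 erefl (ltW (truncnS_gt _)).
Qed.
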